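(* Let $S,T\in\mathbb P$ with $\deg(S)=n$, $\deg(T)=m$, and let $0\le k\le n-m$. Then $$\sum_{U\in\mathbb P,\ \deg(U)=m+k}(S/U)(U/T)=(S/T)\binom{n-m}{k}.$$ Consequently, for all $a,b\in\mathbb C$, $$\sum_{U\in\mathbb P}(S/U)(U/T)\,a^{\,n-\deg(U)}(b-a)^{\deg(U)-m}=(S/T)\,b^{\,n-m}.$$
   Context: Let $\mathbb P$ denote the set of finite planar reduced rooted trees (rooted trees in which the children of each vertex are linearly ordered and no vertex has exactly one child), including the empty tree $\mathbf 1$ and the one-vertex tree $|$. For $T\in\mathbb P$, $\deg(T)$ is the number of leaves and $L(T)$ its set of leaves. For $S\in\mathbb P$ and $I\subseteq L(S)$, the contraction $S|I\in\mathbb P$ is obtained from the subtree of $S$ consisting of all vertices on paths from the root to leaves in $I$ (with induced planar order) by suppressing every vertex having exactly one child ($S|\emptyset=\mathbf 1$, $S|I=|$ if $\#I=1$). The planar binomial coefficient is $(S/T)=\#\{I\subseteq L(S):S|I=T\}$ (zero unless $\deg T\le\deg S$). *)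

From HB Require Import structures.
From mathcomp Require Import all_boot all_order all_algebra.
From mathcomp Require Import boolp classical_sets fsbigop.
Set Implicit Arguments. Unset Strict Implicit. Unset Printing Implicit Defensive.

(* Nonempty finite planar rooted trees: a vertex with its ordered list of children.
   A leaf is [Node [::]]; the one-vertex tree | is [Node [::]]. *)
Inductive ptree := Node of seq ptree.

Definition leaf := Node [::].

Fixpoint encode (t : ptree) : GenTree.tree unit :=
  let: Node s := t in GenTree.Node 0 (map encode s).
Fixpoint decode (t : GenTree.tree unit) : ptree :=
  match t with
  | GenTree.Leaf _ => Node [::]
  | GenTree.Node _ s => Node (map decode s)
  end.
Fixpoint encodeK (t : ptree) : decode (encode t) = t :=
  match t return decode (encode t) = t with
  | Node s => f_equal Node
      ((fix aux (s : seq ptree) : map decode (map encode s) = s :=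
          match s return map decode (map encode s) = s with
          | [::] => erefl
          | c :: s' => f_equal2 cons (encodeK c) (aux s')
          end) s)
  end.
HB.instance Definition _ := Countable.copy ptree (can_type encodeK).

Fixpoint deg (t : ptree) : nat :=
  match t with
  | Node [::] => 1
  | Node s => (fix sumd (s : seq ptree) := match s with
                 | [::] => 0 | c :: s' => deg c + sumd s' end) s
  end.

Fixpoint reduced (t : ptree) : bool :=
  let: Node s := t in (size s != 1) && all reduced s.

(* Contraction of t to the set of leaves whose planar (left-to-right, i.e. DFS)
   index i satisfies p i; [None] is the empty tree. *)
Fixpoint contr (p : nat -> bool) (t : ptree) : option ptree :=
  match t with
  | Node [::] => if p 0 then Some leaf else None
  | Node s =>
    let kids := (fix go (s : seq ptree) (off : nat) := match s with
                   | [::] => [::]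
                   | c :: s' => contr (fun i => p (off + i)) c :: go s' (off + deg c)
                   end) s 0 in
    match pmap id kids with
    | [::] => None
    | [:: k] => Some k
    | ks => Some (Node ks)
    end
  end.

(* The set P: [None] is the empty tree 1, [Some t] a nonempty tree. *)
Definition PT := option ptree.
Definition inP (U : PT) : bool := if U is Some t then reduced t else true.
Definition degP (U : PT) : nat := if U is Some t then deg t else 0.

Definition contrP (S : PT) (I : {set 'I_(degP S)}) : PT :=
  match S return {set 'I_(degP S)} -> PT with
  | None => fun _ => None
  | Some t => fun I => contr (fun i => [exists j in I, nat_of_ord j == i]) t
  end I.

Definition pbinom (S T : PT) : nat :=
  #|[set I : {set 'I_(degP S)} | contrP I == T]|.

From HB Require Import structures.
From mathcomp Require Import all_boot all_order all_algebra.
From mathcomp Require Import boolp classical_sets fsbigop.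
Import GRing.Theory Num.Theory.

(* Contraction is functorial: contracting [S|I] to a set [J] of its leaves is
   the contraction of [S] to the leaves of [I] whose rank in [I] lies in [J],
   and every subset of [I] arises this way exactly once.  Hence [(S|I / T)]
   counts the [I' ⊆ I] with [S|I' = T], and [Σ_U (S/U)(U/T) F(deg U)] is a sum
   over pairs [I' ⊆ I] of leaf sets of [S] with [S|I' = T].  For a fixed [I'],
   the supersets [I] of size [deg T + k] number [C(deg S - deg T, k)]; this is
   the first identity, and the second is the binomial theorem applied to
   [b = a + (b - a)]. *)

Set Implicit Arguments. Unset Strict Implicit. Unset Printing Implicit Defensive.

Definition all_children (P : ptree -> Prop) (s : seq ptree) : Prop :=
  foldr (fun c A => P c /\ A) True s.

Fixpoint ptree_deep_ind (P : ptree -> Prop)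
    (IH : forall s, all_children P s -> P (Node s)) (t : ptree) : P t :=
  let: Node s := t in
  IH s ((fix children (s : seq ptree) : all_children P s :=
           if s is c :: s' then conj (ptree_deep_ind IH c) (children s') else I) s).

Definition degs (s : seq ptree) : nat := sumn (map deg s).

Lemma degs_cat s1 s2 : degs (s1 ++ s2) = degs s1 + degs s2.
Proof. by rewrite /degs map_cat sumn_cat. Qed.

Lemma deg_Node s : s != [::] -> deg (Node s) = degs s.
Proof. by case: s => // c s _ /=; congr (_ + _); elim: s => //= c' s ->. Qed.

Lemma count_iotaD (p : nat -> bool) a b :
  count p (iota 0 (a + b)) = count p (iota 0 a) + count (fun i => p (a + i)) (iota 0 b).
Proof. by rewrite iotaD count_cat add0n -[in iota a b](addn0 a) iotaDl count_map. Qed.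

Lemma count_iota_lt (p : nat -> bool) i j :
  i < j -> p i -> count p (iota 0 i) < count p (iota 0 j).
Proof.
move=> lt_ij p_i; rewrite -(subnKC (ltnW lt_ij)) iotaD count_cat add0n.
rewrite -[X in X < _]addn0 ltn_add2l; have : 0 < j - i by rewrite subn_gt0.
by case: (j - i) => //= k _; rewrite p_i.
Qed.

Definition collapse (ks : seq ptree) : option ptree :=
  match ks with
  | [::] => None
  | [:: k] => Some k
  | [:: k1, k2 & ks'] => Some (Node [:: k1, k2 & ks'])
  end.

Definition oseq (o : option ptree) : seq ptree := if o is Some t then [:: t] else [::].

Definition ocontr (p : nat -> bool) (o : option ptree) : option ptree :=
  if o is Some t then contr p t else None.

Fixpoint contr_forest (p : nat -> bool) (s : seq ptree) : seq ptree :=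
  if s is c :: s' then oseq (contr p c) ++ contr_forest (fun i => p (deg c + i)) s'
  else [::].

(* The anonymous fixpoint inside [contr], named so that it can be rewritten. *)
Definition contr_children (p : nat -> bool) :=
  fix go (s : seq ptree) (off : nat) := match s with
    | [::] => [::]
    | c :: s' => contr (fun i => p (off + i)) c :: go s' (off + deg c)
    end.

Lemma contr_childrenE p s off :
  pmap id (contr_children p s off) = contr_forest (fun i => p (off + i)) s.
Proof.
elim: s off => //= c s IH off; rewrite IH.
have -> : (fun i => p (off + deg c + i)) = (fun i => p (off + (deg c + i))).
  by apply: funext => i; rewrite addnA.
by case: (contr _ c).
Qed.

Lemma contr_Node p s : s != [::] -> contr p (Node s) = collapse (contr_forest p s).
Proof.
move=> s0; have -> : contr p (Node s) = collapse (pmap id (contr_children p s 0)).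
  by case: s s0.
by rewrite contr_childrenE.
Qed.

Lemma contr_leaf p : contr p leaf = if p 0 then Some leaf else None.
Proof. by []. Qed.

Lemma contr_forest_cat p s1 s2 :
  contr_forest p (s1 ++ s2) = contr_forest p s1 ++ contr_forest (fun i => p (degs s1 + i)) s2.
Proof.
elim: s1 p => //= c s1 IH p; rewrite IH catA; congr (_ ++ contr_forest _ _).
by apply: funext => i; rewrite /degs /= addnA.
Qed.

Lemma contr_forest_oseq p o : contr_forest p (oseq o) = oseq (ocontr p o).
Proof. by case: o => //= t; rewrite cats0. Qed.

Lemma degs_oseq o : degs (oseq o) = degP o.
Proof. by case: o => //= t; rewrite /degs /= addn0. Qed.

Lemma degP_collapse ks : degP (collapse ks) = degs ks.
Proof.
case: ks => [|x [|y r]] //; first by rewrite /degs /= addn0.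
exact: (@deg_Node [:: x, y & r]).
Qed.

Lemma ocontr_collapse p ks : ocontr p (collapse ks) = collapse (contr_forest p ks).
Proof.
case: ks => [|x [|y r]] //; first by rewrite /= cats0; case: (contr p x).
exact: (@contr_Node p [:: x, y & r]).
Qed.

Lemma inP_collapse ks : all reduced ks -> inP (collapse ks).
Proof. by case: ks => [|x [|y r]] //= /andP[]. Qed.

Lemma degP_contr t p : degP (contr p t) = count p (iota 0 (deg t)).
Proof.
elim/ptree_deep_ind: t p => s IHs p.
have [->|s0] := eqVneq s [::]; first by rewrite contr_leaf /=; case: (p 0).
rewrite contr_Node // degP_collapse deg_Node //.
elim: s IHs p {s0} => //= c s IH [IHc IHs] p.
by rewrite degs_cat degs_oseq IHc IH // count_iotaD.
Qed.

Lemma inP_contr t p : inP (contr p t).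
Proof.
elim/ptree_deep_ind: t p => s IHs p.
have [->|s0] := eqVneq s [::]; first by rewrite contr_leaf; case: (p 0).
rewrite contr_Node //; apply: inP_collapse.
elim: s IHs p {s0} => //= c s IH [IHc IHs] p.
rewrite all_cat IH // andbT.
by have := IHc p; case: (contr p c) => //= u ->.
Qed.

Definition comp_sel (p q : nat -> bool) : nat -> bool :=
  fun i => p i && q (count p (iota 0 i)).

Lemma contr_comp t p q : ocontr q (contr p t) = contr (comp_sel p q) t.
Proof.
elim/ptree_deep_ind: t p q => s IHs p q.
have [->|s0] := eqVneq s [::]; first by rewrite !contr_leaf /comp_sel /=; case: (p 0).
rewrite !contr_Node // ocontr_collapse; congr collapse.
elim: s IHs p q {s0} => //= c s IH [IHc IHs] p q.
rewrite contr_forest_cat contr_forest_oseq IHc degs_oseq IH //.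
congr (_ ++ contr_forest _ _); apply: funext => i.
by rewrite /comp_sel count_iotaD degP_contr.
Qed.

Definition sel n (I : {set 'I_n}) : nat -> bool :=
  fun i => [exists j in I, nat_of_ord j == i].

Lemma sel_ord n (I : {set 'I_n}) (j : 'I_n) : sel I j = (j \in I).
Proof.
apply/existsP/idP => [[j' /andP[j'I /eqP /val_inj <-]] //|jI].
by exists j; rewrite jI eqxx.
Qed.

Lemma sel_out n (I : {set 'I_n}) i : n <= i -> sel I i = false.
Proof.
move=> ni; apply/existsP => -[j /andP[_ /eqP ji]].
by move: (ltn_ord j); rewrite ji ltnNge ni.
Qed.

Lemma count_sel n (I : {set 'I_n}) : count (sel I) (iota 0 n) = #|I|.
Proof.
rewrite -val_enum_ord count_map cardE /enum_mem size_filter count_filter.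
by apply: eq_count => j /=; rewrite sel_ord andbT.
Qed.

Lemma contrPE U (J : {set 'I_(degP U)}) : contrP J = ocontr (sel J) U.
Proof. by case: U J. Qed.

Lemma degP_contrP S (I : {set 'I_(degP S)}) : degP (contrP I) = #|I|.
Proof.
case: S I => [t|] I /=; first by rewrite degP_contr count_sel.
by apply/esym/eqP; rewrite cards_eq0; apply/eqP/setP => -[].
Qed.

Lemma inP_contrP S (I : {set 'I_(degP S)}) : inP (contrP I).
Proof. by case: S I => [t|] I //=; apply: inP_contr. Qed.

Section Rank.

Variables (n : nat) (I : {set 'I_n}).

Definition rank (i : nat) : nat := count (sel I) (iota 0 i).

Lemma rank_lt_mono (i1 i2 : 'I_n) : i1 < i2 -> i1 \in I -> rank i1 < rank i2.
Proof. by rewrite -sel_ord; apply: count_iota_lt. Qed.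

Lemma rank_lt (i : 'I_n) : i \in I -> rank i < #|I|.
Proof. by rewrite -sel_ord -count_sel; apply: count_iota_lt. Qed.

Lemma rank_inj : {in I &, injective (fun i : 'I_n => rank i)}.
Proof.
move=> i1 i2 i1I i2I /= eq12.
have [lt12|lt21|/val_inj //] := ltngtP i1 i2.
- by have := rank_lt_mono lt12 i1I; rewrite eq12 ltnn.
- by have := rank_lt_mono lt21 i2I; rewrite eq12 ltnn.
Qed.

(* [rank] maps [I] injectively into [0, #|I|), hence onto it. *)
Lemma rank_onto j : j < #|I| -> exists2 i : 'I_n, i \in I & rank i = j.
Proof.
move=> jI.
have [|||_ /(_ j)] := @uniq_min_size _ [seq rank i | i : 'I_n <- enum I] (iota 0 #|I|).
- by rewrite map_inj_in_uniq ?enum_uniq // => x y; rewrite !mem_enum; apply: rank_inj.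
- move=> x /mapP[i]; rewrite mem_enum => iI ->.
  by rewrite mem_iota add0n rank_lt.
- by rewrite size_map size_iota -cardE.
by rewrite mem_iota add0n jI => /mapP[i]; rewrite mem_enum => iI ->; exists i.
Qed.

Definition lift_leaves d (J : {set 'I_d}) : {set 'I_n} := [set i in I | sel J (rank i)].

Lemma lift_leaves_sub d (J : {set 'I_d}) : lift_leaves J \subset I.
Proof. by rewrite /lift_leaves setIdE subsetIl. Qed.

Lemma lift_leaves_inj d : d <= #|I| -> injective (@lift_leaves d).
Proof.
move=> dI J1 J2 eqJ; apply/setP => j.
have [i iI ij] := rank_onto (leq_trans (ltn_ord j) dI).
have := congr1 (fun X : {set 'I_n} => i \in X) eqJ.
by rewrite !inE iI ij !sel_ord.
Qed.

(* Injectivity and #|{set 'I_#|I|}| = #|powerset I| give surjectivity. *)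
Lemma imset_lift_leaves d :
  d = #|I| -> [set lift_leaves J | J : {set 'I_d}] = powerset I.
Proof.
move=> dI; apply/eqP; rewrite eqEcard; apply/andP; split.
  by apply/fintype.subsetP => _ /imsetP[J _ ->]; rewrite powersetE lift_leaves_sub.
rewrite (card_imset _ (lift_leaves_inj (eq_leq dI))) card_powerset.
by rewrite -cardsT -powersetT card_powerset cardsT card_ord dI.
Qed.

End Rank.

Lemma contrP_lift_leaves S (I : {set 'I_(degP S)}) (J : {set 'I_(degP (contrP I))}) :
  contrP J = contrP (lift_leaves I J).
Proof.
rewrite (contrPE J) (contrPE (lift_leaves I J)).
case: S I J => [t|] I J //=; rewrite contr_comp; congr contr.
apply: funext => i; change (sel I i && sel J (rank I i) = sel (lift_leaves I J) i).
have [lt|ge] := ltnP i (deg t).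
  by rewrite -[i]/(nat_of_ord (Ordinal lt)) !sel_ord inE.
by rewrite (sel_out I ge) (sel_out (lift_leaves I J) ge).
Qed.

Lemma pbinom_contrP S (I : {set 'I_(degP S)}) T :
  pbinom (contrP I) T =
  #|[set I' : {set 'I_(degP S)} | (I' \subset I) && (contrP I' == T)]|.
Proof.
have dI := degP_contrP I.
rewrite /pbinom -(card_imset _ (lift_leaves_inj (eq_leq dI))).
apply: eq_card => I'; rewrite inE -powersetE -(imset_lift_leaves dI).
apply/imsetP/andP => [[J] | [/imsetP[J _ ->] /eqP eqT]].
  by rewrite inE => /eqP eqT ->; split; [apply: imset_f | rewrite -contrP_lift_leaves eqT].
by exists J; rewrite // inE contrP_lift_leaves eqT.
Qed.

Lemma card_supsets n (I' : {set 'I_n}) k :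
  #|[set I : {set 'I_n} | (I' \subset I) && (#|I| == #|I'| + k)]| = 'C(n - #|I'|, k).
Proof.
rewrite -(card_in_imset (f := fun I => I :\: I')); last first.
  move=> I1 I2; rewrite !inE => /andP[sub1 _] /andP[sub2 _] /setP eqD.
  apply/setP => x; have := eqD x; rewrite !inE.
  by case: (boolP (x \in I')) => [xI' _ | _ //]; rewrite !(fintype.subsetP _ _ xI').
have -> : n - #|I'| = #|~: I'| by rewrite [#|~: I'|]cardsCs finset.setCK card_ord.
rewrite -cards_draws; apply: eq_card => D; rewrite inE.
apply/imsetP/andP => [[I] | [subD /eqP cardD]].
  rewrite inE => /andP[sub /eqP cardI] ->; split; first by rewrite finset.setDE finset.subsetIr.
  by rewrite cardsD (finset.setIidPr sub) cardI addKn.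
have disD : [disjoint D & I'] by rewrite finset.disjoints_subset.
exists (D :|: I'); last by rewrite finset.setDUl finset.setDv finset.setU0 (finset.setDidPl disD).
by rewrite inE finset.subsetUr cardsU (finset.disjoint_setI0 disD) cards0 subn0 cardD addnC eqxx.
Qed.

Local Open Scope ring_scope.

Lemma fsbig_fibers (R : nmodType) (I : finType) (T : choiceType)
    (f : I -> T) (A : set T) (G : T -> R) :
  \sum_(t \in A) G t *+ #|[set i | f i == t]| = \sum_(i | f i \in A) G (f i).
Proof.
set r := undup [seq f i | i <- enum I].
have f_r i : f i \in r by rewrite mem_undup map_f ?mem_enum.
rewrite (fsbigE [seq t <- r | t \in A]); first last.
- move=> t At; rewrite mem_filter (mem_set At) /= => t_r.
  suff -> : #|[set i | f i == t]| = 0%N by rewrite mulr0n.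
  apply/eqP; rewrite cards_eq0; apply/eqP/setP => i; rewrite !inE.
  by apply/negbTE/eqP => fi; move: t_r; rewrite -fi f_r.
- by move=> t /=; rewrite mem_filter => /andP[/set_mem].
- by rewrite filter_uniq ?undup_uniq.
rewrite big_filter_cond; under eq_bigl do rewrite andbb.
transitivity (\sum_(t <- r) \sum_(i | f i == t) (if t \in A then G t else 0)).
  rewrite big_mkcond; apply: eq_bigr => t _; case: ifP => _; last by rewrite big1.
  by rewrite -sumr_const; apply: eq_bigl => i; rewrite inE.
rewrite (exchange_big_dep xpredT) //= [RHS]big_mkcond; apply: eq_bigr => i _.
rewrite -big_filter (@eq_filter _ _ (pred1 (f i))) => [|t]; last by rewrite /= eq_sym.
by rewrite filter_pred1_uniq ?undup_uniq // big_seq1.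
Qed.


Lemma sum_supsets (R : nmodType) n (I' : {set 'I_n}) (F : nat -> R) :
  \sum_(I : {set 'I_n} | I' \subset I) F #|I| =
  \sum_(k < (n - #|I'|).+1) F (#|I'| + k)%N *+ 'C(n - #|I'|, k).
Proof.
pose excess (I : {set 'I_n}) : 'I_(n - #|I'|).+1 := inord (#|I| - #|I'|).
rewrite (partition_big excess xpredT) //; apply: eq_bigr => k _.
rewrite -card_supsets -sumr_const.
set supsets_k := [set I : {set 'I_n} | _].
rewrite (eq_bigl [in supsets_k]) => [|I]; last first.
  rewrite inE; have [sub /=|//] := boolP (I' \subset I).
  have le_I'I : (#|I'| <= #|I|)%N by apply: subset_leq_card.
  have le_In : (#|I| <= n)%N by rewrite -[n in (_ <= n)%N]card_ord max_card.
  rewrite -val_eqE /= inordK ?ltnS ?leq_sub2r //.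
  by apply/eqP/eqP => [<-|->]; [rewrite subnKC | rewrite addKn].
by apply: eq_bigr => I; rewrite inE => /andP[_ /eqP ->].
Qed.

Lemma sum_pbinom_pbinom (R : nmodType) S T (F : nat -> R) :
  \sum_(U \in [set U | inP U]%classic) F (degP U) *+ (pbinom S U * pbinom U T)%N =
  \sum_(k < (degP S - degP T).+1)
     F (degP T + k)%N *+ (pbinom S T * 'C(degP S - degP T, k))%N.
Proof.
under eq_fsbigr do rewrite mulnC mulrnA.
rewrite (fsbig_fibers (@contrP S) _ (fun U => F (degP U) *+ pbinom U T)).
rewrite (eq_bigl xpredT) => [|I]; last exact/mem_set/inP_contrP.
under eq_bigr do rewrite degP_contrP pbinom_contrP -sumr_const.
set fiberT := [set I' : {set 'I_(degP S)} | contrP I' == T].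
rewrite (exchange_big_dep [in fiberT]) /= => [|I I' _]; last first.
  by rewrite !inE => /andP[].
transitivity (\sum_(I' in fiberT)
    \sum_(k < (degP S - degP T).+1) F (degP T + k)%N *+ 'C(degP S - degP T, k)).
  apply: eq_bigr => I'; rewrite inE => /eqP eqT.
  have cardI' : #|I'| = degP T by rewrite -eqT degP_contrP.
  by rewrite -cardI' -(sum_supsets I'); apply: eq_bigl => I; rewrite inE eqT eqxx andbT.
rewrite sumr_const -sumrMnl; apply: eq_bigr => k _.
by rewrite mulnC mulrnA.
Qed.

Local Open Scope classical_set_scope.

Theorem mainTheorem3 (C : numClosedFieldType) (S T : PT) :
  inP S -> inP T ->
  (forall k : nat, (degP T + k <= degP S)%N ->
     \sum_(U \in [set U : PT | inP U /\ degP U = (degP T + k)%N])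
        (pbinom S U * pbinom U T)%N
     = (pbinom S T * 'C(degP S - degP T, k))%N) /\
  (forall a b : C,
     \sum_(U \in [set U : PT | inP U])
        ((pbinom S U * pbinom U T)%:R * a ^+ (degP S - degP U) * (b - a) ^+ (degP U - degP T))
     = (pbinom S T)%:R * b ^+ (degP S - degP T)).
Proof.
(* The identities hold for all planar trees [S] and [T], reduced or not. *)
move=> _ _; split => [k le_mk_n | a b].
  pose F j : nat := (j == degP T + k)%N.
  rewrite (eq_fsbigr (fun U => F (degP U) *+ (pbinom S U * pbinom U T))); last first.
    by move=> U /set_mem[_ ->]; rewrite /F eqxx natn.
  rewrite (fsbig_widen _ [set U | inP U]) => [|U []//|U [inPU not_degU]]; last first.
    rewrite /preimage /= /F; have [degU|_] := eqVneq (degP U) (degP T + k)%N.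
      by case: not_degU.
    by rewrite mul0rn.
  have lt_k : (k < (degP S - degP T).+1)%N.
    by rewrite ltnS leq_subRL // (leq_trans (leq_addr k _) le_mk_n).
  rewrite sum_pbinom_pbinom (bigD1 (Ordinal lt_k)) //= big1 => [|j ne_jk].
    by rewrite /F eqxx addr0 natn.
  by rewrite /F eqn_add2l -[k]/(val (Ordinal lt_k)) val_eqE (negbTE ne_jk) mul0rn.
pose F j := a ^+ (degP S - j) * (b - a) ^+ (j - degP T).
rewrite (eq_fsbigr (fun U => F (degP U) *+ (pbinom S U * pbinom U T))); last first.
  by move=> U _; rewrite -mulrA mulr_natl.
have -> : b ^+ (degP S - degP T) = (a + (b - a)) ^+ (degP S - degP T) by rewrite addrC subrK.
rewrite sum_pbinom_pbinom exprDn mulr_sumr; apply: eq_bigr => j _.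
by rewrite /F subnDA addKn mulrnAr mulr_natl mulrnA.
Qed.
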